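(* Let $0<p<1/2$, let $1\le\ell\le L$ be integers, and let $\mu=2^{-n}\mathrm{Vol}(n,pn)$. Let $a,b,x_1,\dots,x_L,y_{\ell+1},\dots,y_L$ be chosen independently and uniformly at random from $\mathbb{F}_2^n$. Let $\mathcal{E}$ be the event that $\Delta(a,x_i)\le pn$ and $\Delta(b,x_i)\le pn$ for all $1\le i\le\ell$, and $\Delta(a,x_i)\le pn$ and $\Delta(b,y_i)\le pn$ for all $\ell+1\le i\le L$. Then, for all sufficiently large $n$ (with $pn$ an integer), $$\Pr[\mathcal{E}]\le\min\left(\mu^{2L-\ell+1},\ 2^{-n}\cdot\mu^{2L-\ell}\cdot C_p^L\cdot n^{L/2}\cdot(1+2^{-\alpha_p\ell})^n\right),$$ where $\alpha_p=\frac12\log_2\frac{1}{4p(1-p)}$ and $C_p>0$ is a constant depending only on $p$ for which $\frac{\mathrm{Vol}(n,pn;d)}{\mathrm{Vol}(n,pn)}\le 2^{-\alpha_p d}C_p\sqrt{n}$ for all $1\le d\le n$ and all sufficiently large $n$.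
   Context: $\Delta$ is Hamming distance on $\mathbb{F}_2^n$, $\mathrm{Vol}(n,r)=|\{y:\Delta(0^n,y)\le r\}|$, and $\mathrm{Vol}(n,pn;d)=|\{y:\Delta(0^n,y)\le pn,\ \Delta(1^d0^{n-d},y)\le pn\}|$. *)

From Stdlib Require Import Reals.
From mathcomp Require Import all_boot.
Set Implicit Arguments. Unset Strict Implicit. Unset Printing Implicit Defensive.
Local Open Scope R_scope.

Definition vec (n : nat) := {ffun 'I_n -> bool}.

Definition hdist n (x y : vec n) : nat := #|[pred i : 'I_n | x i != y i]|.

Definition zerov n : vec n := [ffun _ => false].
Definition onesv n (d : nat) : vec n := [ffun i : 'I_n => (i < d)%N].

Definition Vol n (r : nat) : nat := #|[pred y : vec n | (hdist (zerov n) y <= r)%N]|.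
Definition Vol2 n (r d : nat) : nat :=
  #|[pred y : vec n | (hdist (zerov n) y <= r)%N && (hdist (onesv n d) y <= r)%N]|.

(* Sample space: (a, b, (x_1..x_l), (x_{l+1}..x_L), (y_{l+1}..y_L)) *)
Definition sample n l L : finType :=
  (vec n * vec n * {ffun 'I_l -> vec n} * {ffun 'I_(L - l) -> vec n}
     * {ffun 'I_(L - l) -> vec n})%type.

Definition eventE n (r l L : nat) (w : sample n l L) : bool :=
  let: (a, b, xs1, xs2, ys) := w in
  [forall i : 'I_l, (hdist a (xs1 i) <= r)%N && (hdist b (xs1 i) <= r)%N] &&
  [forall j : 'I_(L - l), (hdist a (xs2 j) <= r)%N && (hdist b (ys j) <= r)%N].

Definition PrE n (r l L : nat) : R :=
  (INR #|[pred w : sample n l L | eventE r w]| / INR #|sample n l L|).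

Definition mu n (r : nat) : R := (INR (Vol n r) / 2 ^ n).

Definition log2 (x : R) : R := (ln x / ln 2).
Definition alpha (p : R) : R := (/ 2 * log2 (/ (4 * p * (1 - p)))).

Definition good_Cp (p C : R) : Prop :=
  (0 < C) /\
  exists N0 : nat, forall n r : nat, (N0 <= n)%N -> INR r = (p * INR n) ->
    forall d : nat, (1 <= d <= n)%N ->
      (INR (Vol2 n r d) / INR (Vol n r) <=
         Rpower 2 (- (alpha p * INR d)) * C * sqrt (INR n)).

From Stdlib Require Import Reals Lra.
From mathcomp Require Import all_boot Rstruct zify.
Set Implicit Arguments. Unset Strict Implicit. Unset Printing Implicit Defensive.

(* Given [a] and [b], the points [x_1..x_l] range over the lens
   B(a, r) ∩ B(b, r), of size Vol(n, r; Δ(a, b)), while the other [2(L - l)]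
   points range over full balls; summing over [a] and [b] gives
   Pr[E] = 2^(-n(l+1)) μ^(2(L-l)) Σ_c Vol(n, r; |c|)^l.
   The first bound then follows from Vol(n, r; d) <= Vol(n, r) and the double
   count Σ_c Vol(n, r; |c|) = Vol(n, r)^2.  For the second, the hypothesis on
   C_p gives Vol(n, r; |c|)^l <= Vol(n, r)^l (C_p √n)^l t^|c| with
   t = 2^(-α_p l), and Σ_c t^|c| = (1 + t)^n. *)

Lemma card_preim_inj (T : finType) (f : T -> T) (P : pred T) :
  injective f -> #|[pred x | P (f x)]| = #|[pred x | P x]|.
Proof.
move=> injf; rewrite -!sum1_card [RHS](reindex_inj injf) /=.
by apply: eq_bigl => x; rewrite !inE.
Qed.

Lemma card_pred_sum (T : finType) (P : pred T) : #|[pred x | P x]| = \sum_x (P x : nat).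
Proof. by rewrite -sum1_card big_mkcond /=; apply: eq_bigr => x _; rewrite inE; case: (P x). Qed.

Lemma sum_ffun_on (I J : finType) (A : pred J) :
  (\sum_(f : {ffun I -> J}) (f \in ffun_on A) = #|A| ^ #|I|)%N.
Proof.
by rewrite -card_ffun_on -sum1_card [RHS]big_mkcond /=; apply: eq_bigr => f _; case: (_ \in _).
Qed.

Section Hamming.
Variable n : nat.
Local Notation V := (vec n).

Definition wt (x : V) : nat := hdist (zerov n) x.

Definition vadd (u v : V) : V := [ffun i => u i (+) v i].

Definition vperm (f : 'I_n -> 'I_n) (x : V) : V := [ffun i => x (f i)].

Lemma vaddK a : involutive (vadd^~ a).
Proof. by move=> x; apply/ffunP => i; rewrite !ffunE; case: (x i); case: (a i). Qed.

Lemma vadd_inj a : injective (vadd^~ a).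
Proof. exact: inv_inj (vaddK a). Qed.

Lemma vperm_inj f : injective f -> injective (vperm f).
Proof.
move=> injf x y /ffunP exy; have [g fg gf] := injF_bij injf.
by apply/ffunP => j; have := exy (g j); rewrite !ffunE gf.
Qed.

Lemma hdistC (x y : V) : hdist x y = hdist y x.
Proof. by apply: eq_card => i; rewrite !inE eq_sym. Qed.

Lemma hdist_vadd (a x y : V) : hdist (vadd x a) (vadd y a) = hdist x y.
Proof. by apply: eq_card => i; rewrite !inE !ffunE; case: (x i); case: (y i); case: (a i). Qed.

Lemma hdist_vperm f (x y : V) : injective f -> hdist (vperm f x) (vperm f y) = hdist x y.
Proof.
move=> injf; rewrite /hdist -(card_preim_inj (fun i => x i != y i) injf).
by apply: eq_card => i; rewrite !inE !ffunE.
Qed.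

Lemma hdist_wt (a x : V) : hdist a x = wt (vadd x a).
Proof. by apply: eq_card => i; rewrite !inE !ffunE; case: (x i); case: (a i). Qed.

Lemma wt_le (x : V) : (wt x <= n)%N.
Proof. by apply: leq_trans (max_card _) _; rewrite card_ord. Qed.

Lemma wtE (x : V) : wt x = #|[pred i | x i]|.
Proof. by apply: eq_card => i; rewrite !inE ffunE; case: (x i). Qed.

Lemma card_ball r (a : V) : #|[pred x | (hdist a x <= r)%N]| = Vol n r.
Proof.
rewrite /Vol -(card_preim_inj (fun y => (hdist (zerov n) y <= r)%N) (@vadd_inj a)).
by apply: eq_card => x; rewrite !inE hdist_wt.
Qed.

Lemma Vol_gt0 r : (0 < Vol n r)%N.
Proof.
apply/card_gt0P; exists (zerov n); rewrite inE /hdist.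
by rewrite (@eq_card0 _ [pred i | zerov n i != zerov n i]) // => i; rewrite !inE eqxx.
Qed.

(* Listing the support of [c] before its complement sorts [c] into [1^(wt c) 0^(n - wt c)]. *)
Lemma exists_vperm_onesv (c : V) :
  exists2 f, injective f & vperm f c = onesv n (wt c).
Proof.
set s := enum [pred i | c i] ++ enum [pred i | ~~ c i].
have size_s : size s = n.
  by rewrite size_cat -!cardE (cardC [pred i | c i]) card_ord.
have uniq_s : uniq s.
  rewrite cat_uniq !enum_uniq /= andbT; apply/hasPn => i.
  by rewrite !mem_enum !inE => /negbTE ->.
exists (fun i => nth i s i).
  move=> i j eij; apply/val_inj/eqP.
  have lt_is : (i < size s)%N by rewrite size_s.
  have lt_js : (j < size s)%N by rewrite size_s.
  rewrite (set_nth_default i j lt_js) in eij.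
  by rewrite -(nth_uniq i lt_is lt_js uniq_s) eij.
apply/ffunP => i; rewrite !ffunE wtE cardE nth_cat.
case: ifP => lt_i; first by have := mem_nth i lt_i; rewrite mem_enum inE.
have lt_i' : (i - size (enum [pred i | c i]) < size (enum [pred i | ~~ c i]))%N.
  by rewrite ltn_subLR; [rewrite -size_cat -/s size_s | rewrite leqNgt lt_i].
by have := mem_nth i lt_i'; rewrite mem_enum inE => /negbTE.
Qed.

Lemma card_lens r (a b : V) :
  #|[pred x | (hdist a x <= r)%N && (hdist b x <= r)%N]| = Vol2 n r (hdist a b).
Proof.
have [f injf sort_f] := exists_vperm_onesv (vadd b a).
have inj_g : injective (fun x => vperm f (vadd x a)).
  by move=> x y /(vperm_inj injf) /vadd_inj.
rewrite /Vol2 hdist_wt -sort_f; apply/esym; rewrite -(card_preim_inj _ inj_g).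
apply: eq_card => x; rewrite !inE hdist_vperm // hdist_vadd.
have -> : zerov n = vperm f (vadd a a) by apply/ffunP => i; rewrite !ffunE addbb.
by rewrite hdist_vperm // hdist_vadd.
Qed.

Lemma Vol2_0 r : Vol2 n r 0 = Vol n r.
Proof.
apply: eq_card => x; rewrite !inE.
have -> : onesv n 0 = zerov n by apply/ffunP => i; rewrite !ffunE.
by rewrite andbb.
Qed.

Lemma Vol2_le_Vol r d : (Vol2 n r d <= Vol n r)%N.
Proof. by apply: subset_leq_card; apply/subsetP => x; rewrite !inE => /andP[]. Qed.

Lemma sum_hdist_wt (F : nat -> nat) (a : V) : (\sum_b F (hdist a b) = \sum_c F (wt c))%N.
Proof. by rewrite (reindex_inj (@vadd_inj a)); apply: eq_bigr => c _; rewrite hdist_wt vaddK. Qed.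

(* Double counting of the pairs [(c, x)] with [wt x <= r] and [hdist c x <= r]. *)
Lemma sum_Vol2_wt r : (\sum_c Vol2 n r (wt c) = Vol n r * Vol n r)%N.
Proof.
under eq_bigr => c _ do rewrite -card_lens card_pred_sum.
rewrite exchange_big /= (eq_bigr (fun x => (wt x <= r)%N * Vol n r))%N => [|x _].
  by rewrite -big_distrl /= -card_pred_sum.
rewrite -(card_ball r x) card_pred_sum big_distrr /=.
by apply: eq_bigr => c _; rewrite mulnb (hdistC c x).
Qed.

End Hamming.

Lemma sum_pair (I J : finType) (F : I * J -> nat) :
  (\sum_(u : I * J) F u = \sum_i \sum_j F (i, j))%N.
Proof. by rewrite pair_bigA; apply: eq_bigr => -[]. Qed.

Lemma sum_mul3 (I J K : finType) (F : I -> nat) (G : J -> nat) (H : K -> nat) :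
  (\sum_i \sum_j \sum_k F i * (G j * H k) = (\sum_i F i) * ((\sum_j G j) * \sum_k H k))%N.
Proof.
rewrite [in RHS]big_distrlr big_distrlr /=.
by apply: eq_bigr => i _; apply: eq_bigr => j _; rewrite big_distrr.
Qed.

Lemma card_vec n : #|vec n| = (2 ^ n)%N.
Proof. by rewrite card_ffun card_bool card_ord. Qed.

Definition Vol2_moment n r l : nat := \sum_(c : vec n) Vol2 n r (wt c) ^ l.

Lemma eventE_ffun_on n r l L (a b : vec n) xs1 (xs2 ys : {ffun 'I_(L - l) -> vec n}) :
  eventE r (a, b, xs1, xs2, ys) =
  [&& xs1 \in ffun_on [pred x | (hdist a x <= r) && (hdist b x <= r)],
      xs2 \in ffun_on [pred x | hdist a x <= r] &
      ys \in ffun_on [pred x | hdist b x <= r]].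
Proof.
apply/andP/and3P => [[/forallP on1 /forallP on23] | [/ffun_onP on1 /ffun_onP on2 /ffun_onP on3]].
  split; apply/ffun_onP => i; rewrite inE; first exact: on1.
    by case/andP: (on23 i).
  by case/andP: (on23 i).
split; apply/forallP => i; first by have := on1 i; rewrite inE.
by have := on2 i; have := on3 i; rewrite !inE => -> ->.
Qed.

Lemma card_eventE n r l L :
  #|[pred w : sample n l L | eventE r w]| =
  (2 ^ n * Vol2_moment n r l * Vol n r ^ (2 * (L - l)))%N.
Proof.
rewrite card_pred_sum !sum_pair.
under eq_bigr => a _ do under eq_bigr => b _ do
  under eq_bigr => xs1 _ do under eq_bigr => xs2 _ do under eq_bigr => ys _ do
    rewrite eventE_ffun_on -!mulnb.
under eq_bigr => a _ do under eq_bigr => b _ do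
  rewrite sum_mul3 !sum_ffun_on !card_ord card_lens !card_ball.
under eq_bigr => a _ do rewrite -big_distrl /= (sum_hdist_wt (fun d => Vol2 n r d ^ l)).
by rewrite sum_nat_const card_vec mulnA mul2n -addnn expnD.
Qed.

Lemma Vol2_moment_le n r l : (0 < l)%N -> (Vol2_moment n r l <= Vol n r ^ l.+1)%N.
Proof.
case: l => // l _; apply: (@leq_trans (\sum_c Vol2 n r (wt c) * Vol n r ^ l)%N).
  apply: leq_sum => c _; rewrite expnS leq_mul //.
  by case: l => [|l] //; rewrite leq_exp2r // Vol2_le_Vol.
by rewrite -big_distrl /= sum_Vol2_wt -mulnA -!expnS.
Qed.

Lemma card_sample n l L : #|sample n l L| = (2 ^ n * (2 ^ n) ^ (l.+1 + 2 * (L - l)))%N.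
Proof.
rewrite /sample !card_prod !card_ffun !card_ord card_bool.
by rewrite mul2n -addnn !expnD expnS !mulnA.
Qed.

Open Scope R_scope.

Lemma INR_expn m k : INR (m ^ k)%N = INR m ^ k.
Proof. by elim: k => [|k IH] //; rewrite expnS mult_INR IH. Qed.

Lemma PrE_eq n r l L :
  PrE n r l L = INR (Vol2_moment n r l) / (2 ^ n) ^ l.+1 * mu n r ^ (2 * (L - l)).
Proof.
rewrite /PrE /mu card_eventE card_sample.
rewrite 3!mult_INR !INR_expn (_ : INR 2 = 2); last by rewrite /=; lra.
rewrite (pow_add (2 ^ n) l.+1) /Rdiv Rpow_mult_distr pow_inv.
by field; repeat split; repeat apply: pow_nonzero; lra.
Qed.

Lemma mu_pow n r k : mu n r ^ k = INR (Vol n r) ^ k / (2 ^ n) ^ k.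
Proof. by rewrite /mu /Rdiv Rpow_mult_distr pow_inv. Qed.

Lemma PrE_le n r l L (X : R) : INR (Vol2_moment n r l) <= X ->
  PrE n r l L <= X / (2 ^ n) ^ l.+1 * mu n r ^ (2 * (L - l)).
Proof.
have two_pow_gt0 k : 0 < (2 ^ n) ^ k by apply/pow_lt/pow_lt; lra.
have inv_two_pow_ge0 k : 0 <= / (2 ^ n) ^ k by apply/Rlt_le/Rinv_0_lt_compat.
move=> le_X; rewrite PrE_eq; apply: Rmult_le_compat_r.
  by rewrite mu_pow; apply: Rmult_le_pos => //; apply/pow_le/pos_INR.
exact: Rmult_le_compat_r.
Qed.

Lemma INR_sum (I : finType) (F : I -> nat) :
  INR (\sum_i F i)%N = \big[Rplus/0]_i INR (F i).
Proof. exact: (big_morph INR plus_INR (erefl _)). Qed.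

Lemma sum_Rle (I : finType) (F G : I -> R) : (forall i, F i <= G i) ->
  \big[Rplus/0]_i F i <= \big[Rplus/0]_i G i.
Proof. by move=> leFG; apply: (big_ind2 Rle) => [|x1 x2 y1 y2|i _]; [lra|lra|exact: leFG]. Qed.

Lemma iter_Rmult k (x : R) : iter k (Rmult x) 1 = x ^ k.
Proof. by elim: k => //= k ->. Qed.

Lemma sum_pow_wt n (t : R) : \big[Rplus/0]_(c : vec n) t ^ wt c = (1 + t) ^ n.
Proof.
under eq_bigr => c _ do rewrite wtE -iter_Rmult -big_const big_mkcond /=.
rewrite -(bigA_distr_bigA (fun (_ : 'I_n) (b : bool) => if b then t else 1)) /=.
under eq_bigr => i _ do rewrite big_bool /= Rplus_comm.
by rewrite big_const card_ord iter_Rmult.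
Qed.

Lemma Rpower_pow_comm (b c : R) (d l : nat) : 0 < b ->
  Rpower b (- (c * INR d)) ^ l = Rpower b (- (c * INR l)) ^ d.
Proof.
move=> b_gt0; rewrite -!Rpower_pow; try exact: exp_pos.
by rewrite !Rpower_mult; congr Rpower; ring.
Qed.

Section WeightedMoment.
Variables (n r l : nat) (a C : R).
Hypothesis Vol2_ratio_le : forall d, (1 <= d <= n)%N ->
  INR (Vol2 n r d) / INR (Vol n r) <= Rpower 2 (- (a * INR d)) * C * sqrt (INR n).
Hypothesis one_le_Csqrt : 1 <= C * sqrt (INR n).

Let V_gt0 : 0 < INR (Vol n r). Proof. exact/lt_0_INR/ltP/Vol_gt0. Qed.

Lemma Vol2_pow_le d : (d <= n)%N ->
  INR (Vol2 n r d) ^ l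
  <= INR (Vol n r) ^ l * (C * sqrt (INR n)) ^ l * Rpower 2 (- (a * INR l)) ^ d.
Proof.
have V_pow_ge0 := pow_le _ l (Rlt_le _ _ V_gt0).
case: d => [_ | d le_dn].
  have := pow_R1_Rle _ l one_le_Csqrt; rewrite Vol2_0 /=; nra.
have le_Vol2 : INR (Vol2 n r d.+1)
    <= INR (Vol n r) * (Rpower 2 (- (a * INR d.+1)) * C * sqrt (INR n)).
  have -> : INR (Vol2 n r d.+1) = INR (Vol n r) * (INR (Vol2 n r d.+1) / INR (Vol n r)).
    by field; lra.
  by apply: Rmult_le_compat_l; [lra | exact: Vol2_ratio_le].
have := pow_incr _ _ l (conj (pos_INR _) le_Vol2).
rewrite Rmult_assoc !Rpow_mult_distr Rpower_pow_comm; last lra.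
by move=> h; apply: (Rle_trans _ _ _ h); right; ring.
Qed.

Lemma Vol2_moment_le_weighted k : (l <= k)%N ->
  INR (Vol2_moment n r l)
  <= INR (Vol n r) ^ l * (C * sqrt (INR n)) ^ k * (1 + Rpower 2 (- (a * INR l))) ^ n.
Proof.
move=> le_lk; have t_gt0 : 0 < Rpower 2 (- (a * INR l)) := exp_pos _.
apply: Rle_trans (_ : _ <= INR (Vol n r) ^ l * (C * sqrt (INR n)) ^ l
                              * (1 + Rpower 2 (- (a * INR l))) ^ n) _.
  rewrite /Vol2_moment INR_sum -sum_pow_wt big_distrr /=.
  by apply: sum_Rle => c; rewrite INR_expn; apply: Vol2_pow_le; apply: wt_le.
apply/Rmult_le_compat_r/Rmult_le_compat_l; first by apply: pow_le; lra.
  exact/pow_le/pos_INR.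
by apply: Rle_pow => //; apply/leP.
Qed.

End WeightedMoment.

Lemma eventually_one_le_mul_sqrt (C : R) : 0 < C ->
  exists N : nat, forall n : nat, (N <= n)%N -> 1 <= C * sqrt (INR n).
Proof.
move=> C_gt0; have [N gt_N] := INR_unbounded (/ (C * C)).
exists N => n /leP/le_INR le_Nn.
have CCn_ge1 : 1 <= C * C * INR n.
  have -> : 1 = C * C * / (C * C) by field; lra.
  by apply: Rmult_le_compat_l; nra.
rewrite -(sqrt_square C); last lra.
rewrite -sqrt_mult; try nra.
by rewrite -sqrt_1; apply: sqrt_le_1; nra.
Qed.

Lemma Rpower_half_pow (x : R) (k : nat) : 0 < x -> Rpower x (INR k / 2) = sqrt x ^ k.
Proof.
move=> x_gt0; rewrite -Rpower_pow; last exact: sqrt_lt_R0.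
rewrite -Rpower_sqrt // Rpower_mult.
by congr Rpower; field.
Qed.

Theorem lemma10 (p : R) (l L : nat) (C : R) :
  (0 < p < / 2) -> (1 <= l <= L)%N -> good_Cp p C ->
  exists N : nat, forall n r : nat, (N <= n)%N -> INR r = (p * INR n) ->
    (PrE n r l L <=
      Rmin (mu n r ^ (2 * L - l + 1))
           (/ 2 ^ n * mu n r ^ (2 * L - l) * C ^ L
              * Rpower (INR n) (INR L / 2)
              * (1 + Rpower 2 (- (alpha p * INR l))) ^ n)).
Proof.
(* The range of [p] only matters for the existence of [C], which is assumed. *)
move=> _ /andP[l_gt0 le_lL] [C_gt0 [N0 Vol2_ratio_le]].
have [N1 one_le_Csqrt] := eventually_one_le_mul_sqrt C_gt0.
exists (N0 + N1 + 1)%N => n r le_Nn r_eq.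
have {}one_le_Csqrt : 1 <= C * sqrt (INR n) by apply: one_le_Csqrt; lia.
have N0_le_n : (N0 <= n)%N by lia.
have {}Vol2_ratio_le := Vol2_ratio_le n r N0_le_n r_eq.
apply: Rmin_glb.
- apply: Rle_trans (PrE_le _ (le_INR _ _ (leP (Vol2_moment_le n r l_gt0)))) _; right.
  rewrite (_ : 2 * L - l + 1 = l.+1 + 2 * (L - l))%N; last by lia.
  by rewrite INR_expn (pow_add (mu n r) l.+1) (mu_pow _ _ l.+1).
- apply: Rle_trans (PrE_le _ (Vol2_moment_le_weighted Vol2_ratio_le one_le_Csqrt le_lL)) _; right.
  rewrite Rpower_half_pow; last by apply/lt_0_INR/ltP; lia.
  rewrite (_ : 2 * L - l = l + 2 * (L - l))%N; last by lia.
  rewrite (pow_add (mu n r) l) (mu_pow _ _ l) Rpow_mult_distr.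
  by rewrite /= /Rdiv; field; split; repeat apply: pow_nonzero; lra.
Qed.
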